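(* The subdivision map $\omega:\Xi\to\Xi$, $\omega([(L,v)])=[(\omega(L),v)]$, is injective.
   Context: Combinatorial tiling: 2-dimensional CW-complex homeomorphic to the open unit disk. Decorated subdivision: a decorated pentagon has boundary vertices $v_1,\dots,v_5$ in cyclic order (indices mod 5), corner $v_i$ labelled $i$; $\omega$ adds $m_i$ inside edge $v_iv_{i+1}$, interior vertices $c_1,\dots,c_5$, edges $c_ic_{i+1}$, $c_im_i$, and replaces the face by the central pentagon $c_1\cdots c_5$ (label $i+1$ at $c_i$) and petals $v_i\,m_i\,c_i\,c_{i-1}\,m_{i-1}$ labelled $i,i+1,i+2,i+3,i+4$ (mod 5). $K_0$ is one decorated pentagon, $K_n=\omega^n(K_0)$ embeds label-preservingly onto the central superpentagon $\omega^n(\text{central face of }\omega(K_0))$ of $K_{n+1}$, and $K$ is the direct limit. Isomorphisms are cell-preserving bijections preserving labels. A patch is a finite subcomplex that is a union of faces connected through chains of faces sharing edges. $L$ is locally isomorphic to $K$ if every patch of $L$ is isomorphic to a patch of $K$. $\Xi$ is the set of isomorphism classes $[(L,v)]$ with $L$ locally isomorphic to $K$ and $v$ a vertex of $L$. For such $L$, $\omega(L)$ is obtained by applying $\omega$ to every face of $L$; it is again locally isomorphic to $K$, and each vertex $v$ of $L$ is a vertex of $\omega(L)$. *)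

From mathcomp Require Import all_boot.

From Stdlib Require Import Relation_Operators.
From Stdlib Require List.
Set Implicit Arguments. Unset Strict Implicit. Unset Printing Implicit Defensive.

(* Labels 1..5 of the paper are encoded as 0..4 : 'I_5 (shift by one). *)
Definition nx (i : 'I_5) : 'I_5 := ordS i.
Definition pv (i : 'I_5) : 'I_5 := ord_pred i.

(* A 2-complex all of whose faces are decorated pentagons.
   fv f i = the vertex at the corner of f labelled i,
   fe f i = the edge of f joining the corners labelled i and i+1.
   The boundary cycle of f is fv f 0, fv f 1, ..., fv f 4 (cyclically).
   The cells of the complex are the faces and the vertices / edges incident
   to faces; elements of the carrier types cV, cE not incident to any face
   are ignored by every notion below. *)
Record cplx := Cplx {
  cV : Type; cE : Type; cF : Type;
  fv : cF -> 'I_5 -> cV;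
  fe : cF -> 'I_5 -> cE }.

Arguments fv {c} _ _.
Arguments fe {c} _ _.

Definition is_vertex (L : cplx) (v : cV L) := exists f i, @fv L f i = v.
Definition is_edge (L : cplx) (e : cE L) := exists f i, @fe L f i = e.

Definition finite_on (T : Type) (P : T -> Prop) :=
  exists s : list T, forall x, P x -> List.In x s.

Section Subdiv.
Variables (V E F : Type).
Inductive sdV := OldV of V | MidV of E | CenV of F & 'I_5.
  (* MidV e = m on edge e ; CenV f i = c_i of face f *)
Inductive sdE := HalfE of E & V | RingE of F & 'I_5 | SpokeE of F & 'I_5.
  (* HalfE e v = half of old edge e containing old endpoint v;
     RingE f i = edge c_i c_{i+1} ; SpokeE f i = edge c_i m_i *)
Inductive sdF := Central of F | Petal of F & 'I_5.
End Subdiv.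
Arguments OldV {V E F} _.
Arguments MidV {V E F} _.
Arguments CenV {V E F} _ _.
Arguments HalfE {V E F} _ _.
Arguments RingE {V E F} _ _.
Arguments SpokeE {V E F} _ _.
Arguments Central {F} _.
Arguments Petal {F} _ _.

Definition pdiff (k i : 'I_5) : nat := (k + (5 - i)) %% 5.

Definition sd (L : cplx) : cplx :=
  @Cplx (sdV (cV L) (cE L) (cF L)) (sdE (cV L) (cE L) (cF L)) (sdF (cF L))
    (fun g k => match g with
       | Central f => CenV f (pv k)              (* label i+1 at c_i *)
       | Petal f i => match pdiff k i with           (* v_i m_i c_i c_{i-1} m_{i-1} *)
           | 0 => OldV (fv f i)
           | 1 => MidV (fe f i)
           | 2 => CenV f i
           | 3 => CenV f (pv i)
           | _ => MidV (fe f (pv i))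
           end
       end)
    (fun g k => match g with
       | Central f => RingE f (pv k)
       | Petal f i => match pdiff k i with
           | 0 => HalfE (fe f i) (fv f i)
           | 1 => SpokeE f i
           | 2 => RingE f (pv i)
           | 3 => SpokeE f (pv i)
           | _ => HalfE (fe f (pv i)) (fv f i)
           end
       end).

Definition K0 : cplx := @Cplx 'I_5 'I_5 unit (fun _ i => i) (fun _ i => i).
Fixpoint Kn (n : nat) : cplx := match n with 0 => K0 | n.+1 => sd (Kn n) end.

(* phV, phE, phF restrict to a label-preserving cell-preserving bijection
   from the subcomplex generated by the faces in P1 onto the one generated
   by the faces in P2. *)
Definition iso_maps (L1 L2 : cplx) (P1 : cF L1 -> Prop) (P2 : cF L2 -> Prop)
    (phV : cV L1 -> cV L2) (phE : cE L1 -> cE L2) (phF : cF L1 -> cF L2) :=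
  (forall f, P1 f -> P2 (phF f)) /\
  (forall g, P2 g -> exists f, P1 f /\ phF f = g) /\
  (forall f f', P1 f -> P1 f' -> phF f = phF f' -> f = f') /\
  (forall f i, P1 f -> fv (phF f) i = phV (fv f i) /\ fe (phF f) i = phE (fe f i)) /\
  (forall f i g j, P1 f -> P1 g -> phV (fv f i) = phV (fv g j) -> fv f i = fv g j) /\
  (forall f i g j, P1 f -> P1 g -> phE (fe f i) = phE (fe g j) -> fe f i = fe g j).

Definition iso_on (L1 L2 : cplx) (P1 : cF L1 -> Prop) (P2 : cF L2 -> Prop) :=
  exists phV phE phF, @iso_maps L1 L2 P1 P2 phV phE phF.

(* isomorphism of pointed complexes (L1,v1) ~ (L2,v2): equality in Xi *)
Definition pointed_iso (L1 : cplx) (v1 : cV L1) (L2 : cplx) (v2 : cV L2) :=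
  exists phV phE phF,
    @iso_maps L1 L2 (fun _ => True) (fun _ => True) phV phE phF /\ phV v1 = v2.

Definition adj_in (L : cplx) (P : cF L -> Prop) (f g : cF L) :=
  P f /\ P g /\ exists i j, fe f i = fe g j.

Definition face_connected_on (L : cplx) (P : cF L -> Prop) :=
  forall f g, P f -> P g -> clos_refl_trans (cF L) (adj_in P) f g.

Definition patch (L : cplx) (P : cF L -> Prop) :=
  [/\ finite_on P, exists f, P f & face_connected_on P].

(* patches of the direct limit K are (up to isomorphism) the patches of the
   K_n, which embed into K *)
Definition loc_iso_K (L : cplx) :=
  forall P : cF L -> Prop, patch P ->
    exists n (Q : cF (Kn n) -> Prop), patch Q /\ iso_on P Q.

Definition edge_ok (L : cplx) := forall (f g : cF L) i j, fe f i = fe g j ->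
  (fv f i = fv g j /\ fv f (nx i) = fv g (nx j)) \/
  (fv f i = fv g (nx j) /\ fv f (nx i) = fv g j).

Definition regular_faces (L : cplx) := forall f : cF L, injective (fv f).

Definition two_sided (L : cplx) := forall e : cE L, is_edge e ->
  exists f i g j, [/\ fe f i = e, fe g j = e, (f, i) <> (g, j) &
    forall h k, fe h k = e -> (h, k) = (f, i) \/ (h, k) = (g, j)].

Definition link_rel (L : cplx) (v : cV L) (c d : cF L * 'I_5) :=
  [/\ fv c.1 c.2 = v, fv d.1 d.2 = v &
      exists e, (e = fe c.1 c.2 \/ e = fe c.1 (pv c.2)) /\
                (e = fe d.1 d.2 \/ e = fe d.1 (pv d.2))].

Definition vertex_links (L : cplx) := forall v : cV L, is_vertex v ->
  finite_on (fun c : cF L * 'I_5 => fv c.1 c.2 = v) /\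
  forall c d, fv c.1 c.2 = v -> fv d.1 d.2 = v ->
    clos_refl_trans _ (link_rel v) c d.

Definition dart (L : cplx) := (cE L * cV L * cV L)%type.  (* (edge, source, target) *)
Definition drev (L : cplx) (d : dart L) : dart L := (d.1.1, d.2, d.1.2).
Definition dvalid (L : cplx) (d : dart L) := exists f i, fe f i = d.1.1 /\
  ((fv f i = d.1.2 /\ fv f (nx i) = d.2) \/ (fv f (nx i) = d.1.2 /\ fv f i = d.2)).
Definition fside (L : cplx) (f : cF L) (i : 'I_5) : dart L := (fe f i, fv f i, fv f (nx i)).
Definition fbound (L : cplx) (f : cF L) (i : 'I_5) : seq (dart L) :=
  [:: fside f i; fside f (nx i); fside f (nx (nx i));
      fside f (nx (nx (nx i))); fside f (nx (nx (nx (nx i))))].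

Inductive hstep (L : cplx) : seq (dart L) -> seq (dart L) -> Prop :=
| hs_back p q d : dvalid d -> hstep (p ++ d :: drev d :: q) (p ++ q)
| hs_face p q f i : hstep (p ++ fbound f i ++ q) (p ++ q)
| hs_face_rev p q f i : hstep (p ++ rev (map (@drev L) (fbound f i)) ++ q) (p ++ q).

Definition homotopic (L : cplx) := clos_refl_sym_trans (seq (dart L)) (@hstep L).

Fixpoint path_ok (L : cplx) (v w : cV L) (p : seq (dart L)) : Prop :=
  match p with
  | [::] => v = w
  | d :: q => [/\ dvalid d, d.1.2 = v & path_ok d.2 w q]
  end.

Definition simply_connected (L : cplx) := forall (v : cV L) p,
  is_vertex v -> path_ok v v p -> homotopic p [::].

(* the realization is homeomorphic to the open unit disk *)
Definition comb_tiling (L : cplx) :=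
  edge_ok L /\ regular_faces L /\ two_sided L /\ vertex_links L /\
  face_connected_on (fun _ : cF L => True) /\
  ~ finite_on (fun _ : cF L => True) /\ simply_connected L.

(* (L, v) represents an element of Xi *)
Definition in_Xi (L : cplx) (v : cV L) := [/\ comb_tiling L, loc_iso_K L & is_vertex v].

(* In ω(L) the central pentagons can be recognised combinatorially: each of
   their sides is shared only with the side two steps further along the
   adjacent petal, whereas a petal shares its spoke with another petal at a
   different offset.  An isomorphism ω(L1) ≅ ω(L2) therefore maps central
   faces to central faces, and then each petal of a face f of L1 to the petal
   with the same label of the image face.  Reading off old corners from the
   petals' corners labelled i, and old edges from their midpoints, gives an
   isomorphism L1 ≅ L2 that sends v1 to v2. *)
From mathcomp Require Import all_boot.

Set Implicit Arguments.
Unset Strict Implicit.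
Unset Printing Implicit Defensive.

Ltac case_ord5 i := case: i => [[|[|[|[|[|?]]]]] ?] //.

Lemma pv_inj : injective pv.
Proof. by move=> i j /(congr1 val); case_ord5 i; case_ord5 j => _; apply: val_inj. Qed.

Lemma nxK : cancel nx pv.
Proof. by move=> i; apply: val_inj; case_ord5 i. Qed.

Lemma nx_neq (i : 'I_5) : nx i <> i.
Proof. by move/(congr1 val); case_ord5 i. Qed.

Lemma pv_neq_nx3 (i : 'I_5) : pv i <> nx (nx (nx i)).
Proof. by move/(congr1 val); case_ord5 i. Qed.

Lemma pdiff_id (i : 'I_5) : pdiff i i = 0. Proof. by case_ord5 i. Qed.
Lemma pdiff_nx (i : 'I_5) : pdiff (nx i) i = 1. Proof. by case_ord5 i. Qed.
Lemma pdiff_nx2 (i : 'I_5) : pdiff (nx (nx i)) i = 2. Proof. by case_ord5 i. Qed.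
Lemma pdiff_pv_nx (i : 'I_5) : pdiff (pv i) (nx i) = 3. Proof. by case_ord5 i. Qed.

Lemma pdiff2_nx2 (i j : 'I_5) : pdiff j i = 2 -> j = nx (nx i).
Proof. by move=> eq2; apply: val_inj; move: eq2; case_ord5 i; case_ord5 j. Qed.

Definition central_like (M : cplx) (g : cF M) :=
  forall k h j, fe h j = fe g k -> (h = g /\ j = k) \/ j = nx (nx k).

Lemma central_like_Central (L : cplx) (f : cF L) :
  central_like (Central f : cF (sd L)).
Proof.
move=> k [f'|f' i] j /=.
  by case=> -> eq_pv; left; split=> //; apply/pv_inj/val_inj.
case eq_d: (pdiff j i) => [|[|[|[|?]]]] //= [-> eq_pv]; right.
have /pv_inj <- : pv i = pv k by apply: val_inj.
exact: pdiff2_nx2.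
Qed.

(* The spoke of Petal f i is side pv i of Petal f (nx i): offset three, not two. *)
Lemma not_central_like_Petal (L : cplx) (f : cF L) (i : 'I_5) :
  ~ central_like (Petal f i : cF (sd L)).
Proof.
move=> centr; case: (centr (nx i) (Petal f (nx i)) (pv i)).
- by rewrite /= pdiff_pv_nx pdiff_nx nxK.
- by case=> [[]] /nx_neq.
- exact: pv_neq_nx3.
Qed.

Lemma iso_maps_central_like (M1 M2 : cplx) phV phE phF :
  @iso_maps M1 M2 (fun _ => True) (fun _ => True) phV phE phF ->
  forall g, central_like g <-> central_like (phF g).
Proof.
case=> _ [onto [injF [lab [_ injE]]]] g; split.
- move=> centr k h' j; case: (onto h' I) => h [_ <-].
  rewrite (proj2 (lab h j I)) (proj2 (lab g k I)) => /injE eq_e.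
  by case: (centr k h j (eq_e I I)) => [[-> ->]|]; [left|right].
- move=> centr k h j eq_e.
  have eq_e' : fe (phF h) j = fe (phF g) k.
    by rewrite (proj2 (lab h j I)) (proj2 (lab g k I)) eq_e.
  by case: (centr k _ _ eq_e') => [[/injF -> // ->]|]; [left|right].
Qed.

Definition old_part (V E F : Type) (d : V) (x : sdV V E F) : V :=
  if x is OldV v then v else d.
Definition mid_part (V E F : Type) (d : E) (x : sdV V E F) : E :=
  if x is MidV e then e else d.
Definition face_part (F : Type) (x : sdF F) : F :=
  match x with Central f | Petal f _ => f end.

Section RestrictIso.

Variables (L1 L2 : cplx) (phV : cV (sd L1) -> cV (sd L2))
  (phE : cE (sd L1) -> cE (sd L2)) (phF : cF (sd L1) -> cF (sd L2)).
Hypothesis iso : iso_maps (fun _ => True) (fun _ => True) phV phE phF.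

Lemma sd_iso_Central_Petal (f : cF L1) : exists g,
  phF (Central f) = Central g /\ forall i, phF (Petal f i) = Petal g i.
Proof.
have central_iff := iso_maps_central_like iso.
have [_ [_ [_ [lab _]]]] := iso.
have : central_like (phF (Central f)) by apply/central_iff/central_like_Central.
case eq_c: (phF (Central f)) => [g|g i] centr; last by case: (not_central_like_Petal centr).
exists g; split=> // i.
have : ~ central_like (phF (Petal f i)) by move/central_iff/not_central_like_Petal.
case eq_p: (phF (Petal f i)) => [g'|g' i'] not_centr.
  by case: not_centr; apply: central_like_Central.
(* Petal f i and Central f share the ring edge, which pins down the image petal. *)
have ring_p := proj2 (lab (Petal f i) (nx (nx i)) I).
have ring_c := proj2 (lab (Central f) i I).
rewrite /= pdiff_nx2 in ring_p; rewrite eq_p eq_c /= in ring_p ring_c.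
rewrite -ring_c /= in ring_p.
case: (pdiff (nx (nx i)) i') ring_p => [|[|[|[|?]]]] //= [-> eq_pv].
by congr Petal; apply/pv_inj/val_inj.
Qed.

Variable g0 : cF L2.

(* g0 only supplies default values, which are never hit on cells of L1. *)
Let PF (f : cF L1) : cF L2 := face_part (phF (Central f)).
Let PV (v : cV L1) : cV L2 := old_part (fv g0 ord0) (phV (OldV v)).
Let PE (e : cE L1) : cE L2 := mid_part (fe g0 ord0) (phV (MidV e)).

Lemma sd_iso_OldV (f : cF L1) (i : 'I_5) :
  phV (OldV (fv f i)) = OldV (fv (PF f) i).
Proof.
have [_ [_ [_ [lab _]]]] := iso; have [g [eq_c eq_p]] := sd_iso_Central_Petal f.
have := proj1 (lab (Petal f i) i I).
by rewrite eq_p /= pdiff_id => <-; rewrite /PF eq_c.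
Qed.

Lemma sd_iso_MidV (f : cF L1) (i : 'I_5) :
  phV (MidV (fe f i)) = MidV (fe (PF f) i).
Proof.
have [_ [_ [_ [lab _]]]] := iso; have [g [eq_c eq_p]] := sd_iso_Central_Petal f.
have := proj1 (lab (Petal f i) (nx i) I).
by rewrite eq_p /= pdiff_nx => <-; rewrite /PF eq_c.
Qed.

Lemma sd_iso_restrict : exists psV psE psF,
  iso_maps (fun _ => True) (fun _ => True) psV psE psF /\
  forall v w, phV (OldV v) = OldV w -> psV v = w.
Proof.
have [_ [onto [injF [_ [injV _]]]]] := iso.
have PVE f i : PV (fv f i) = fv (PF f) i by rewrite /PV sd_iso_OldV.
have PEE f i : PE (fe f i) = fe (PF f) i by rewrite /PE sd_iso_MidV.
exists PV, PE, PF; split; last by move=> v w; rewrite /PV => ->.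
split=> //; split.
  move=> g _; have [[f|f i] [_ eq_h]] := onto (Central g) I.
    by exists f; split=> //; rewrite /PF eq_h.
  have : central_like (phF (Petal f i)) by rewrite eq_h; apply: central_like_Central.
  by move/(iso_maps_central_like iso)/not_central_like_Petal.
split.
  move=> f f' _ _ eq_PF.
  have [g [eq_c _]] := sd_iso_Central_Petal f.
  have [g' [eq_c' _]] := sd_iso_Central_Petal f'.
  have : Central f = Central f' :> cF (sd L1).
    by apply: injF => //; move: eq_PF; rewrite /PF eq_c eq_c' /= => ->.
  by case.
split; first by move=> f i _; rewrite PVE PEE.
split.
  move=> f i g j _ _; rewrite !PVE => eq_v.
  have := injV (Petal f i) i (Petal g j) j I I.
  by rewrite /= !pdiff_id !sd_iso_OldV eq_v => /(_ erefl) [].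
move=> f i g j _ _; rewrite !PEE => eq_e.
have := injV (Petal f i) (nx i) (Petal g j) (nx j) I I.
by rewrite /= !pdiff_nx !sd_iso_MidV eq_e => /(_ erefl) [].
Qed.

End RestrictIso.

Theorem mainTheorem7 :
  forall (L1 : cplx) (v1 : cV L1) (L2 : cplx) (v2 : cV L2),
    in_Xi v1 -> in_Xi v2 ->
    pointed_iso (OldV v1 : cV (sd L1)) (OldV v2 : cV (sd L2)) ->
    pointed_iso v1 v2.
Proof.
move=> L1 v1 L2 v2 _ [_ _ [g0 _]] [phV [phE [phF [iso phV_v1]]]].
have [psV [psE [psF [iso' psV_old]]]] := sd_iso_restrict iso g0.
by exists psV, psE, psF; split; [exact: iso' | exact: psV_old].
Qed.
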